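(* Let $q=2^h$ with $h\equiv 1\pmod 2$, let $$U=\left\{\left(x,y,x^q+y^{q^2},x^{q^2}+y^q+y^{q^2}\right): x,y\in\mathbb F_{q^4}\right\}\subseteq\mathbb F_{q^4}^4,$$ and let $\mathcal C$ be an $[8,4]_{q^4/q}$ code associated to $U$. Then the dual code $\mathcal C^\perp$ is equivalent to $\mathcal C$.
   Context: A code associated to $U$ is the $\mathbb F_{q^4}$-row space of the $4\times 8$ matrix whose columns are an $\mathbb F_q$-basis of $U$. The dual code is $\mathcal C^\perp=\{u\in\mathbb F_{q^4}^8: uv^\top=0\ \forall v\in\mathcal C\}$. Two codes $\mathcal C_1,\mathcal C_2\subseteq\mathbb F_{q^m}^n$ are (linearly) equivalent if $\mathcal C_2=\{vA: v\in\mathcal C_1\}$ for some $A\in\mathrm{GL}(n,q)$. *)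

From HB Require Import structures.
From mathcomp Require Import all_boot all_order all_algebra all_field.
Set Implicit Arguments. Unset Strict Implicit. Unset Printing Implicit Defensive.
Import GRing.Theory.
Local Open Scope ring_scope.

Section Defs.
Variable L : finFieldType.

(* x lies in the subfield F_q of L (for #|L| = q^4 this is exactly F_q) *)
Definition inFq (q : nat) (x : L) : bool := x ^+ q == x.

Definition Uvec (q : nat) (x y : L) : 'cV[L]_4 :=
  \col_(i < 4)
    match val i with
    | 0 => x
    | 1 => y
    | 2 => x ^+ q + y ^+ (q ^ 2)
    | _ => x ^+ (q ^ 2) + y ^+ q + y ^+ (q ^ 2)
    end.

Definition inU (q : nat) (v : 'cV[L]_4) : Prop := exists x y : L, v = Uvec q x y.

Definition Fq_basis_of_U (q n : nat) (G : 'M[L]_(4, n)) : Prop :=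
  [/\ forall j, inU q (col j G),
      forall c : 'I_n -> L, (forall j, inFq q (c j)) ->
        \sum_j c j *: col j G = 0 -> forall j, c j = 0
    & forall v, inU q v ->
        exists c : 'I_n -> L, (forall j, inFq q (c j)) /\ v = \sum_j c j *: col j G].

Definition code (m n : nat) (G : 'M[L]_(m, n)) : {set 'rV[L]_n} :=
  [set v | (v <= G)%MS].

Definition dual_code (n : nat) (C : {set 'rV[L]_n}) : {set 'rV[L]_n} :=
  [set u | [forall v in C, u *m v^T == 0]].

Definition lin_equiv (q n : nat) (C1 C2 : {set 'rV[L]_n}) : Prop :=
  exists A : 'M[L]_n,
    [/\ forall i j, inFq q (A i j), A \in unitmx & C2 = [set v *m A | v in C1]].

End Defs.

From HB Require Import structures.
From mathcomp Require Import all_boot all_order all_algebra all_field all_fingroup.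
Import GRing.Theory.
Local Open Scope ring_scope.
Set Implicit Arguments. Unset Strict Implicit. Unset Printing Implicit Defensive.

(* Let X, Y be the first two rows of G and M the 8 x 8 matrix whose rows are
   X^(q^a) and Y^(q^a), a < 4.  The coordinates of U are F_2-combinations of
   these Frobenius powers, so G = Phi M for a fixed 0/1 matrix Phi, and M is
   invertible: a vector in its left kernel would give a q-polynomial of
   q-degree < 4 vanishing on all of F_(q^4).  There is a symmetric involution
   Psi with circulant 4 x 4 blocks such that Phi Psi Phi^T = 0 in
   characteristic 2.  Then the dual code is the row space of G B with
   B = M^-1 Psi M^-T, and A = M^T Psi M satisfies B A = 1.  The Frobenius
   x |-> x^q shifts the rows of M cyclically inside each block, which commutes
   with Psi, so A is Frobenius-fixed, i.e. A lies in GL(8, q), and C^perp A = C. *)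

Section FrobeniusPower.

Variables (R : comNzRingType) (p : nat) (pcharRp : p \in [pchar R]) (k : nat).

Definition frobenius_pow of p \in [pchar R] := fun x : R => x ^+ (p ^ k).
Local Notation frob := (frobenius_pow pcharRp).

Fact frobenius_pow_is_nmod_morphism : nmod_morphism frob.
Proof.
have p_prime := pcharf_prime pcharRp.
split=> [|x y]; first by rewrite /frobenius_pow expr0n expn_eq0 (gtn_eqF (prime_gt0 p_prime)).
by apply: exprDn_pchar; rewrite (eq_pnat _ (pcharf_eq pcharRp)) pnatX pnat_id.
Qed.

Fact frobenius_pow_is_monoid_morphism : monoid_morphism frob.
Proof. by split=> [|x y]; rewrite /frobenius_pow ?expr1n ?exprMn. Qed.

HB.instance Definition _ := GRing.isNmodMorphism.Build R R frob
  frobenius_pow_is_nmod_morphism.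
HB.instance Definition _ := GRing.isMonoidMorphism.Build R R frob
  frobenius_pow_is_monoid_morphism.

End FrobeniusPower.

Definition cycle_perm n : 'S_n := perm (@ordS_inj n).

Definition block_shift_mx (R : nzRingType) n : 'M[R]_(n + n) :=
  block_mx (perm_mx (cycle_perm n)) 0 0 (perm_mx (cycle_perm n)).

Definition qpoly_eval (R : nzRingType) q n (w : 'rV[R]_n) (x : R) :=
  \sum_(a < n) w 0 a * x ^+ (q ^ a).

Definition moore_mx (R : nzRingType) q n N (X : 'I_N -> R) : 'M[R]_(n, N) :=
  \matrix_(a < n, l < N) X l ^+ (q ^ a).

Definition moore2_mx (R : nzRingType) q n N (X Y : 'I_N -> R) : 'M[R]_(n + n, N) :=
  col_mx (moore_mx q n X) (moore_mx q n Y).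

Section MooreMatrices.

Variables (L : finFieldType) (p h : nat) (pcharLp : p \in [pchar L]).
Hypothesis h_gt0 : (0 < h)%N.
Local Notation q := (p ^ h)%N.
Local Notation frob_q := (frobenius_pow h pcharLp).

Lemma q_gt1 : (1 < q)%N.
Proof. by rewrite -(expn0 p) ltn_exp2l // prime_gt1 ?(pcharf_prime pcharLp). Qed.

Lemma inFq_expn (c : L) a : inFq q c -> c ^+ (q ^ a) = c.
Proof. by move=> /eqP cq; elim: a => [|a IHa]; rewrite ?expr1 // expnSr exprM IHa. Qed.

Lemma expn_Fq_comb N (c x : 'I_N -> L) a : (forall l, inFq q (c l)) ->
  (\sum_l c l * x l) ^+ (q ^ a) = \sum_l c l * x l ^+ (q ^ a).
Proof.
move=> cFq; rewrite -expnM -[LHS]/(frobenius_pow (h * a) pcharLp _) rmorph_sum.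
by apply: eq_bigr => l _; rewrite rmorphM /= /frobenius_pow expnM (inFq_expn _ (cFq l)).
Qed.

Lemma qpoly_eval0 n (w : 'rV[L]_n) : qpoly_eval q w 0 = 0.
Proof.
rewrite /qpoly_eval big1 // => a _.
by rewrite expr0n expn_eq0 (gtn_eqF (ltnW q_gt1)) mulr0.
Qed.

Lemma qpoly_eval_Fq_comb n N (w : 'rV[L]_n) (c x : 'I_N -> L) :
  (forall l, inFq q (c l)) ->
  qpoly_eval q w (\sum_l c l * x l) = \sum_l c l * qpoly_eval q w (x l).
Proof.
move=> cFq; rewrite /qpoly_eval.
under eq_bigr => a _ do rewrite expn_Fq_comb // mulr_sumr.
rewrite exchange_big /=; apply: eq_bigr => l _.
by rewrite mulr_sumr; apply: eq_bigr => a _; rewrite mulrCA.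
Qed.

(* The polynomial has degree at most q^(n-1) < #|L|, so it cannot have all
   of L as roots unless it is zero. *)
Lemma qpoly_eval_eq0 n (w : 'rV[L]_n) :
  #|L| = (q ^ n)%N -> (forall x, qpoly_eval q w x = 0) -> w = 0.
Proof.
move=> cardL w0; pose P : {poly L} := \sum_(a < n) w 0 a *: 'X^(q ^ a).
have P0 : P = 0.
  apply: contraTeq isT => /max_poly_roots roots_le.
  have PL : all (root P) (enum L).
    apply/allP => x _; rewrite /root /P horner_sum -[X in _ == X](w0 x).
    by apply/eqP/eq_bigr => a _; rewrite hornerZ hornerXn.
  have := roots_le _ PL (enum_uniq L); rewrite -cardE cardL ltnNge => /negP[].
  apply: (leq_trans (size_sum _ _ _)); apply/bigmax_leqP => a _.
  by apply: (leq_trans (size_scale_leq _ _)); rewrite size_polyXn ltn_exp2l ?q_gt1.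
apply/rowP => a; have /(congr1 (coefp (q ^ a))) := P0.
rewrite /= coef0 /P coef_sum (bigD1 a) //= coefZ coefXn eqxx mulr1.
rewrite big1 ?addr0 ?mxE // => b /negPf ba.
by rewrite coefZ coefXn eqn_exp2l ?q_gt1 // eq_sym (inj_eq val_inj) ba mulr0.
Qed.

Lemma moore_mx_mulE n N (w : 'rV[L]_n) (X : 'I_N -> L) l :
  (w *m moore_mx q n X) 0 l = qpoly_eval q w (X l).
Proof. by rewrite mxE; apply: eq_bigr => a _; rewrite mxE. Qed.

Lemma map_moore_mx_frobenius n N (X : 'I_N -> L) : #|L| = (q ^ n)%N ->
  map_mx frob_q (moore_mx q n X) = perm_mx (cycle_perm n) *m moore_mx q n X.
Proof.
move=> cardL; rewrite -row_permE; apply/matrixP => a l.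
rewrite !mxE permE /= /frobenius_pow -exprM -expnSr.
have [lt_an | ge_an] := ltnP a.+1 n; first by rewrite modn_small.
have -> : a.+1 = n by apply/eqP; rewrite eqn_leq ltn_ord.
by rewrite modnn expn0 expr1 -cardL expf_card.
Qed.

Lemma map_moore2_mx_frobenius n N (X Y : 'I_N -> L) : #|L| = (q ^ n)%N ->
  map_mx frob_q (moore2_mx q n X Y) = block_shift_mx L n *m moore2_mx q n X Y.
Proof.
move=> cardL; rewrite map_col_mx !map_moore_mx_frobenius //.
by rewrite mul_block_col !mul0mx addr0 add0r.
Qed.

Lemma moore2_mx_unit n (X Y : 'I_(n + n) -> L) : #|L| = (q ^ n)%N ->
  (forall x y, exists2 c : 'I_(n + n) -> L, forall l, inFq q (c l) &
     x = \sum_l c l * X l /\ y = \sum_l c l * Y l) ->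
  moore2_mx q n X Y \in unitmx.
Proof.
move=> cardL XYspan; rewrite -row_free_unit; apply: inj_row_free => z.
rewrite -[z]hsubmxK mul_row_col; set zx := lsubmx z; set zy := rsubmx z => z0.
have eval0 x y : qpoly_eval q zx x + qpoly_eval q zy y = 0.
  have [c cFq [-> ->]] := XYspan x y.
  rewrite !qpoly_eval_Fq_comb // -big_split big1 // => l _.
  move/rowP/(_ l): z0; rewrite [in LHS]mxE !moore_mx_mulE mxE.
  by move=> XY0; rewrite /= -mulrDr XY0 mulr0.
have zx0 : zx = 0.
  by apply: (qpoly_eval_eq0 cardL) => x; have := eval0 x 0; rewrite qpoly_eval0 addr0.
have zy0 : zy = 0.
  by apply: (qpoly_eval_eq0 cardL) => y; have := eval0 0 y; rewrite qpoly_eval0 add0r.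
by rewrite zx0 zy0 row_mx0.
Qed.

Lemma moore2_congr_inFq n N (X Y : 'I_N -> L) (Psi : 'M_(n + n)) :
  #|L| = (q ^ n)%N -> map_mx frob_q Psi = Psi ->
  (block_shift_mx L n)^T *m Psi *m block_shift_mx L n = Psi ->
  forall i j, inFq q (((moore2_mx q n X Y)^T *m Psi *m moore2_mx q n X Y) i j).
Proof.
move=> cardL Psi_frob Psi_shift i j; set M := moore2_mx q n X Y.
have : map_mx frob_q (M^T *m Psi *m M) = M^T *m Psi *m M.
  rewrite !map_mxM -map_trmx map_moore2_mx_frobenius // Psi_frob trmx_mul.
  by rewrite -[in RHS]Psi_shift !mulmxA.
by move/matrixP/(_ i j); rewrite mxE => frob_ij; apply/eqP.
Qed.

End MooreMatrices.

Section Codes.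

Variable L : finFieldType.

Lemma mem_dual_code m n (G : 'M[L]_(m, n)) u :
  (u \in dual_code (code G)) = (u *m G^T == 0).
Proof.
rewrite inE; apply/forallP/eqP => [uG0 | uG0 v].
  apply/rowP => j; have := uG0 (row j G); rewrite inE row_sub => /eqP/rowP/(_ 0).
  by rewrite !mxE => uGj0; rewrite -[RHS]uGj0; apply: eq_bigr => k _; rewrite !mxE.
apply/implyP; rewrite inE => /submxP[D ->].
by rewrite trmx_mul mulmxA uG0 mul0mx.
Qed.

Lemma dual_code_mulmx m n (G : 'M[L]_(m, n)) (B : 'M_n) :
  (n <= m + m)%N -> row_free G -> B \in unitmx -> G *m B *m G^T = 0 ->
  dual_code (code G) = code (G *m B).
Proof.
move=> n_le_2m freeG Bu GBG0.
have GB_ker : (G *m B <= kermx G^T)%MS by rewrite sub_kermx GBG0.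
have rankGB : \rank (G *m B) = m by rewrite mxrankMfree ?row_free_unit ?(eqP freeG).
have rank_ker : \rank (kermx G^T) = (n - m)%N by rewrite mxrank_ker mxrank_tr (eqP freeG).
have ker_GB : (kermx G^T <= G *m B)%MS.
  have := mxrankS GB_ker; rewrite rankGB rank_ker => m_le_nm.
  by rewrite -(mxrank_leqif_sup GB_ker) rankGB rank_ker eqn_leq m_le_nm leq_subLR.
apply/setP => u; rewrite mem_dual_code inE -sub_kermx.
by apply/idP/idP => /submx_trans; apply.
Qed.

Lemma code_mulmx m n (H : 'M[L]_(m, n)) (A : 'M_n) :
  A \in unitmx -> [set v *m A | v in code H] = code (H *m A).
Proof.
move=> Au; apply/setP => w; rewrite inE; apply/imsetP/idP => [[v] | wHA].
  by rewrite inE => vH ->; apply: submxMr.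
exists (w *m invmx A); last by rewrite mulmxKV.
by rewrite inE -[H](mulmxK Au) submxMr.
Qed.

Lemma lin_equiv_dual_code q m n (Phi : 'M[L]_(m, n)) (M Psi : 'M_n) :
  (n <= m + m)%N -> row_free Phi -> M \in unitmx ->
  Psi *m Psi = 1%:M -> Phi *m Psi *m Phi^T = 0 ->
  (forall i j, inFq q ((M^T *m Psi *m M) i j)) ->
  lin_equiv q (dual_code (code (Phi *m M))) (code (Phi *m M)).
Proof.
move=> n_le_2m freePhi Mu Psi2 PhiPsiPhi0 AFq.
set A := M^T *m Psi *m M; set B := invmx M *m Psi *m (invmx M)^T.
have MinvT : (invmx M)^T *m M^T = 1%:M by rewrite -trmx_mul mulmxV ?trmx1.
have BA : B *m A = 1%:M.
  rewrite /A /B -!mulmxA (mulmxA _ M^T) MinvT mul1mx (mulmxA Psi) Psi2 mul1mx.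
  exact: mulVmx.
have [Bu Au] := mulmx1_unit BA.
have MBMT : M *m B *m M^T = Psi.
  by rewrite /B !mulmxA mulmxV // mul1mx -mulmxA MinvT mulmx1.
exists A; split => //; rewrite (@dual_code_mulmx _ _ _ B) //.
- by rewrite code_mulmx // -mulmxA BA mulmx1.
- by rewrite /row_free mxrankMfree ?row_free_unit.
- by rewrite trmx_mul -[RHS]PhiPsiPhi0 -MBMT !mulmxA.
Qed.

End Codes.

(* Entry-wise checks are phrased with [all] over [iota] rather than with
   [forall] or bigops over ordinals, whose locked definitions block [vm_compute]. *)
Definition all_entries m n (r : nat -> nat -> bool) :=
  all (fun i => all (r i) (iota 0 n)) (iota 0 m).

Lemma all_entriesP m n r : all_entries m n r -> forall (i : 'I_m) (j : 'I_n), r i j.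
Proof.
move=> /allP r_all i j.
have /allP : all (r i) (iota 0 n) by apply: r_all; rewrite mem_iota ltn_ord.
by apply; rewrite mem_iota ltn_ord.
Qed.

Section NatMatrices.

Variable R : nzRingType.

Definition nat_mx m n (f : nat -> nat -> nat) : 'M[R]_(m, n) := \matrix_(i, j) (f i j)%:R.

Definition nat_mul n (f g : nat -> nat -> nat) i k := sumn [seq f i j * g j k | j <- iota 0 n].

Lemma nat_mx_mul m n p f g :
  nat_mx m n f *m nat_mx n p g = nat_mx m p (nat_mul n f g).
Proof.
apply/matrixP => i k; rewrite !mxE /nat_mul sumnE big_map natr_sum.
rewrite [iota 0 n](_ : _ = index_iota 0 n) ?big_mkord; last by rewrite /index_iota subn0.
by apply: eq_bigr => j _; rewrite !mxE natrM.
Qed.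

Lemma tr_nat_mx m n f : (nat_mx m n f)^T = nat_mx n m (fun i j => f j i).
Proof. by apply/matrixP => i j; rewrite !mxE. Qed.

Lemma nat_mx1 n : nat_mx n n (fun i j => i == j) = 1%:M.
Proof. by apply/matrixP => i j; rewrite !mxE. Qed.

Lemma nat_mx0 m n : nat_mx m n (fun _ _ => 0%N) = 0.
Proof. by apply/matrixP => i j; rewrite !mxE. Qed.

Lemma perm_mx_cycle n : perm_mx (cycle_perm n) = nat_mx n n (fun i j => j == i.+1 %% n)%N.
Proof. by apply/matrixP => i j; rewrite !mxE permE eq_sym. Qed.

Lemma block_nat_mx m1 m2 n1 n2 a b c d :
  block_mx (nat_mx m1 n1 a) (nat_mx m1 n2 b) (nat_mx m2 n1 c) (nat_mx m2 n2 d) =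
  nat_mx (m1 + m2) (n1 + n2) (fun i j =>
    if i < m1 then (if j < n1 then a i j else b i (j - n1))
    else if j < n1 then c (i - m1) j else d (i - m1) (j - n1))%N.
Proof.
apply/matrixP => i j; rewrite !mxE.
by case: splitP => i' ->; rewrite mxE; case: splitP => j' ->;
  rewrite !mxE /= ?ltn_ord ?ltnNge ?leq_addr ?addKn.
Qed.

Lemma eq_nat_mx m n (f g : nat -> nat -> nat) :
  all_entries m n (fun i j => f i j == g i j) -> nat_mx m n f = nat_mx m n g.
Proof. by move=> /all_entriesP fg; apply/matrixP => i j; rewrite !mxE (eqP (fg i j)). Qed.

Lemma eq_nat_mx_mod p m n (f g : nat -> nat -> nat) : p \in [pchar R] ->
  all_entries m n (fun i j => f i j == g i j %[mod p]) ->
  nat_mx m n f = nat_mx m n g.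
Proof.
move=> pcharRp /all_entriesP fg; apply/matrixP => i j; rewrite !mxE.
by rewrite -(GRing.natr_mod_pchar pcharRp) (eqP (fg i j)) GRing.natr_mod_pchar.
Qed.

End NatMatrices.

Lemma map_nat_mx (R S : nzRingType) (phi : {rmorphism R -> S}) m n f :
  map_mx phi (nat_mx R m n f) = nat_mx S m n f.
Proof. by apply/matrixP => i j; rewrite !mxE rmorph_nat. Qed.

Definition table (t : seq (seq nat)) (i j : nat) : nat := nth 0 (nth [::] t i) j.

(* Row i gives coordinate i of (x, y, x^q + y^(q^2), x^(q^2) + y^q + y^(q^2))
   in the basis x, x^q, x^(q^2), x^(q^3), y, y^q, y^(q^2), y^(q^3). *)
Definition U_coef := table
  [:: [:: 1; 0; 0; 0;  0; 0; 0; 0];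
      [:: 0; 0; 0; 0;  1; 0; 0; 0];
      [:: 0; 1; 0; 0;  0; 0; 1; 0];
      [:: 0; 0; 1; 0;  0; 1; 1; 0]].

Definition U_coef_rinv := table
  [:: [:: 1; 0; 0; 0]; [:: 0; 0; 1; 0]; [:: 0; 0; 0; 1]; [:: 0; 0; 0; 0];
      [:: 0; 1; 0; 0]; [:: 0; 0; 0; 0]; [:: 0; 0; 0; 0]; [:: 0; 0; 0; 0]].

(* With S the cyclic shift of 'I_4, the blocks are S^2, S + S^3, S + S^3 and
   S + S^2 + S^3: all circulant, hence invariant under conjugation by S. *)
Definition circ_form := table
  [:: [:: 0; 0; 1; 0;  0; 1; 0; 1];
      [:: 0; 0; 0; 1;  1; 0; 1; 0];
      [:: 1; 0; 0; 0;  0; 1; 0; 1];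
      [:: 0; 1; 0; 0;  1; 0; 1; 0];
      [:: 0; 1; 0; 1;  0; 1; 1; 1];
      [:: 1; 0; 1; 0;  1; 0; 1; 1];
      [:: 0; 1; 0; 1;  1; 1; 0; 1];
      [:: 1; 0; 1; 0;  1; 1; 1; 0]].

Section CircForm.

Variable R : nzRingType.
Local Notation Phi := (nat_mx R 4 (4 + 4) U_coef).
Local Notation Psi := (nat_mx R (4 + 4) (4 + 4) circ_form).

Lemma circ_form_shift_invariant :
  (block_shift_mx R 4)^T *m Psi *m block_shift_mx R 4 = Psi.
Proof.
rewrite /block_shift_mx perm_mx_cycle -(nat_mx0 R) block_nat_mx tr_nat_mx.
by rewrite !nat_mx_mul; apply: eq_nat_mx; vm_compute.
Qed.

Lemma mulmx_U_coef_rinv : Phi *m nat_mx R (4 + 4) 4 U_coef_rinv = 1%:M.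
Proof. by rewrite nat_mx_mul -nat_mx1; apply: eq_nat_mx; vm_compute. Qed.

Hypothesis pcharR2 : 2 \in [pchar R].

Lemma circ_form_invol : Psi *m Psi = 1%:M.
Proof. by rewrite nat_mx_mul -nat_mx1; apply: (eq_nat_mx_mod pcharR2); vm_compute. Qed.

Lemma U_coef_circ_isotropic : Phi *m Psi *m Phi^T = 0.
Proof.
rewrite tr_nat_mx !nat_mx_mul -(nat_mx0 R).
by apply: (eq_nat_mx_mod pcharR2); vm_compute.
Qed.

End CircForm.

Section UCode.

Variables (L : finFieldType) (q : nat).

Lemma Uvec_factor N (G : 'M[L]_(4, N)) : (forall l, inU q (col l G)) ->
  G = nat_mx L 4 (4 + 4) U_coef *m moore2_mx q 4 (G 0) (G 1).
Proof.
move=> GU; apply/matrixP => i l; have [x [y /colP Gl]] := GU l.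
have G_Uvec i' : G i' l = Uvec q x y i' 0 by rewrite -Gl mxE.
rewrite mxE big_split_ord /=.
under eq_bigr do rewrite col_mxEu.
under [X in _ + X]eq_bigr do rewrite col_mxEd.
rewrite !big_ord_recl !big_ord0 !mxE !G_Uvec !mxE /bump /U_coef /table /=.
rewrite expn0 expn1 !expr1.
by case: i => [[|[|[|[|//]]]] ?] /=; rewrite ?mulr1n ?mulr0n ?mul1r ?mul0r ?add0r ?addr0 ?addrA.
Qed.

Lemma Uvec_Fq_span N (G : 'M[L]_(4, N)) :
  (forall v, inU q v -> exists c : 'I_N -> L,
     (forall j, inFq q (c j)) /\ v = \sum_j c j *: col j G) ->
  forall x y, exists2 c : 'I_N -> L, forall l, inFq q (c l) &
    x = \sum_l c l * G 0 l /\ y = \sum_l c l * G 1 l.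
Proof.
move=> Gspan x y; have [|c [cFq /colP Uc]] := Gspan (Uvec q x y); first by exists x, y.
exists c => //; split; [have := Uc 0 | have := Uc 1];
  by rewrite !mxE summxE /= => ->; apply: eq_bigr => l _; rewrite !mxE.
Qed.

End UCode.

Theorem proposition4p14 (L : finFieldType) (h : nat) :
  odd h -> #|L| = ((2 ^ h) ^ 4)%N ->
  forall G : 'M[L]_(4, 8), Fq_basis_of_U (2 ^ h) G ->
  lin_equiv (2 ^ h) (dual_code (code G)) (code G).
Proof.
move=> h_odd cardL G [GU _ Gspan].
have pcharL2 : 2 \in [pchar L] by apply: (@card_finPcharP _ _ (h * 4)); rewrite ?expnM.
have h_gt0 := odd_gt0 h_odd.
rewrite (Uvec_factor GU); apply: lin_equiv_dual_code => //.
- by apply/row_freeP; exists (nat_mx L _ _ U_coef_rinv); apply: mulmx_U_coef_rinv.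
- exact: (moore2_mx_unit pcharL2 h_gt0 cardL (Uvec_Fq_span Gspan)).
- exact: circ_form_invol.
- exact: U_coef_circ_isotropic.
- apply: (moore2_congr_inFq (pcharLp := pcharL2) _ _ cardL); first exact: map_nat_mx.
  exact: circ_form_shift_invariant.
Qed.
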